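(* Let $G$ be an $X-Y$ normalized graph, let $S \subseteq N(X)$, and assume that no vertex of $S$ is adjacent to a vertex of $Y$. Let $K_1$ be an important $X-Y$ separator of $G$ disjoint with $S$ and let $K(S)$ be the important witness of $S$. Then $K_1 \geq K(S)$.
   Context: $G$ is a finite undirected graph and $X,Y$ are disjoint subsets of $V(G)$; $N(C)=(\bigcup_{v\in C}N(v))\setminus C$. An $X-Y$ separator is a set $K \subseteq V(G) \setminus (X \cup Y)$ such that $G \setminus K$ has no path from $X$ to $Y$; minimal means inclusion-minimal. $G$ is $X-Y$ normalized if $N(X)$ is the only minimum-cardinality $X-Y$ separator. Let $r$ be the minimum size of an $X-Y$ separator; the excess of an $X-Y$ separator $K$ is $|K|-r$. For $S\subseteq N(X)$, the cover excess $CE(S)$ is the excess of a smallest $X-Y$ separator disjoint with $S$. An $X-Y$ separator $K$ with $K\cap S=\emptyset$ and excess $CE(S)$ is a witness of $S$. $NR(G,Y,K)$ is the set of vertices not reachable from $Y$ in $G\setminus K$; $K \geq K'$ means $NR(G,Y,K)\supseteq NR(G,Y,K')$, and $K'<K$ means $K\geq K'$ and $NR(G,Y,K)\ne NR(G,Y,K')$. A minimal $X-Y$ separator $K$ is important if there is no $X-Y$ separator $K'$ with $K<K'$ and $|K|\geq|K'|$. An important witness of $S$ is a witness of $S$ that is an important $X-Y$ separator; under the hypotheses it exists and is unique, denoted $K(S)$. *)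

From mathcomp Require Import all_boot.
Set Implicit Arguments. Unset Strict Implicit. Unset Printing Implicit Defensive.

(* A finite simple undirected graph: vertex type V : finType, adjacency e
   (assumed symmetric and irreflexive in the theorem). *)
Section Sep.
Variables (V : finType) (e : rel V) (X Y : {set V}).

Definition nbh (C : {set V}) : {set V} :=
  [set v | [exists u in C, e u v]] :\: C.

Definition edge_avoid (K : {set V}) : rel V :=
  [rel u v | [&& e u v, u \notin K & v \notin K]].

Definition reach (K : {set V}) (u v : V) : bool :=
  (u \notin K) && connect (edge_avoid K) u v.

Definition separator (K : {set V}) : bool :=
  (K :&: (X :|: Y) == set0) &&
  [forall x in X, forall y in Y, ~~ reach K x y].

Definition minimal_separator (K : {set V}) : bool :=
  separator K && [forall K' : {set V}, (K' \proper K) ==> ~~ separator K'].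

Definition min_sep_size : nat :=
  \big[minn/#|V|]_(K : {set V} | separator K) #|K|.

Definition excess (K : {set V}) : nat := #|K| - min_sep_size.

Definition normalized : bool :=
  separator (nbh X) && (#|nbh X| == min_sep_size) &&
  [forall K : {set V}, (separator K && (#|K| == min_sep_size)) ==> (K == nbh X)].

Definition cover_excess (S : {set V}) : nat :=
  \big[minn/#|V|]_(K : {set V} | separator K && [disjoint K & S]) excess K.

Definition witness (S K : {set V}) : bool :=
  [&& separator K, [disjoint K & S] & excess K == cover_excess S].

Definition NR (K : {set V}) : {set V} :=
  [set v | ~~ [exists y in Y, reach K y v]].

Definition sep_ge (K K' : {set V}) : bool := NR K' \subset NR K.
Definition sep_lt (K' K : {set V}) : bool := sep_ge K K' && (NR K != NR K').

Definition important (K : {set V}) : bool :=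
  minimal_separator K &&
  ~~ [exists K' : {set V}, [&& separator K', sep_lt K K' & #|K'| <= #|K|]].

Definition important_witness (S K : {set V}) : bool :=
  witness S K && important K.
End Sep.

From mathcomp Require Import all_boot.
Set Implicit Arguments. Unset Strict Implicit. Unset Printing Implicit Defensive.

(* Let A and B be the sets of vertices reachable from Y avoiding K1 and K(S)
   respectively; K1 >= K(S) means A is contained in B.  Otherwise N(A :&: B)
   is a separator strictly beyond K1, hence larger than K1 because K1 is
   important.  By submodularity of |N(.)|, the separator N(A :|: B) is then
   smaller than K(S); it avoids S since it lies inside K1 :|: K(S), which
   contradicts the minimal excess of the witness K(S). *)

Lemma bigmin_leq (T : finType) (P : pred T) (F : T -> nat) n x :
  P x -> \big[minn/n]_(y | P y) F y <= F x.
Proof.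
move=> Px; have : x \in index_enum T by rewrite mem_index_enum.
elim: (index_enum T) => [|a r IH] //; rewrite inE big_cons => /orP[/eqP <-|xr].
  by rewrite Px geq_minl.
by case: (P a); [apply: leq_trans (geq_minr _ _) (IH xr)|exact: IH].
Qed.

Section Uncrossing.
Variables (V : finType) (e : rel V) (X Y : {set V}).
Hypothesis e_sym : symmetric e.

Definition Yreach (K : {set V}) : {set V} :=
  [set v | [exists y in Y, reach e K y v]].

Lemma NR_Yreach K v : (v \in NR e Y K) = (v \notin Yreach K).
Proof. by rewrite !inE. Qed.

Lemma edge_avoid_connect_sym K : connect_sym (edge_avoid e K).
Proof.
apply: sym_connect_sym => u v; rewrite /edge_avoid /= e_sym.
by case: (v \in K); case: (u \in K); rewrite ?andbF ?andbT.
Qed.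

Lemma connect_avoid_notin K u v :
  connect (edge_avoid e K) u v -> u \notin K -> v \notin K.
Proof.
move=> uv uK.
have cl : closed (edge_avoid e K) [pred w | w \notin K].
  apply: intro_closed; first exact: edge_avoid_connect_sym.
  by move=> x y /and3P[_ _ yK] _; rewrite inE.
by rewrite -[_ \notin _]/(v \in [pred w | w \notin K]) -(closed_connect cl uv).
Qed.

Lemma reach_sym K u v : reach e K u v -> reach e K v u.
Proof.
case/andP=> uK uv; apply/andP; split; first exact: connect_avoid_notin uv uK.
by rewrite edge_avoid_connect_sym.
Qed.

Lemma separator_disjointX K : separator e X Y K -> [disjoint K & X].
Proof.
case/andP=> /eqP KXY _; rewrite -setI_eq0 -subset0 -KXY.
by apply: setIS; apply: subsetUl.
Qed.

Lemma sub_Yreach K : separator e X Y K -> Y \subset Yreach K.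
Proof.
case/andP=> /eqP KXY _; apply/subsetP => y yY; rewrite inE.
apply/existsP; exists y; rewrite yY /= /reach connect0 andbT.
apply: contraT; rewrite negbK => yK.
have : y \in K :&: (X :|: Y) by rewrite !inE yK yY orbT.
by rewrite KXY inE.
Qed.

Lemma Yreach_disjointX K : separator e X Y K -> [disjoint Yreach K & X].
Proof.
case/andP=> _ /forallP sepK; rewrite disjoint_sym disjoint_subset.
apply/subsetP => x xX; rewrite !inE; apply/existsP => -[y /andP[yY /reach_sym xy]].
by move: (sepK x); rewrite xX => /forallP /(_ y); rewrite yY xy.
Qed.

Lemma nbh_Yreach_sub K : nbh e (Yreach K) \subset K.
Proof.
apply/subsetP => v; rewrite !inE => /andP[vR /existsP[u /andP[uR euv]]].
apply: contraR vR => vK; move: uR; rewrite inE => /existsP[y /andP[yY /andP[yK yu]]].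
apply/existsP; exists y; rewrite yY /= /reach yK /=.
apply: (connect_trans yu) (connect1 _).
by rewrite /edge_avoid /= euv vK (connect_avoid_notin yu yK).
Qed.

Lemma Yreach_nbh_sub (C : {set V}) : Y \subset C -> Yreach (nbh e C) \subset C.
Proof.
move=> YC; apply/subsetP => v; rewrite inE => /existsP[y /andP[yY /andP[_ yv]]].
have cl : closed (edge_avoid e (nbh e C)) [pred w | w \in C].
  apply: intro_closed; first exact: edge_avoid_connect_sym.
  move=> a b /= /and3P[eab _ bN] aC; apply: contraR bN => bC.
  by rewrite !inE bC; apply/existsP; exists a; rewrite aC.
by rewrite -[v \in C]/(v \in [pred w | w \in C]) -(closed_connect cl yv) /= (subsetP YC).
Qed.

Lemma separator_nbh (C : {set V}) :
  Y \subset C -> [disjoint C & X] -> [disjoint nbh e C & X] ->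
  separator e X Y (nbh e C).
Proof.
move=> YC CX NX; apply/andP; split.
  rewrite setIUr setU_eq0 !setI_eq0 NX; apply: disjointWr YC _.
  by rewrite disjoints_subset /nbh setDE subsetIr.
apply/forallP => x; apply/implyP => xX; apply/forallP => y; apply/implyP => yY.
apply/negP => /reach_sym yx.
have : x \in Yreach (nbh e C) by rewrite inE; apply/existsP; exists y; rewrite yY.
by move/(subsetP (Yreach_nbh_sub YC)); rewrite (disjointFl CX xX).
Qed.

Lemma nbhI_sub (A B : {set V}) : nbh e (A :&: B) \subset nbh e A :|: nbh e B.
Proof.
apply/subsetP => v; rewrite !inE => /andP[vAB /existsP[u /andP[/setIP[uA uB] euv]]].
case vA: (v \in A) => /=; last by apply/orP; left; apply/existsP; exists u; rewrite uA.
by move: vAB; rewrite vA /= => vB; rewrite vB /=; apply/existsP; exists u; rewrite uB.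
Qed.

Lemma nbhU_sub (A B : {set V}) : nbh e (A :|: B) \subset nbh e A :|: nbh e B.
Proof.
apply/subsetP => v; rewrite !inE negb_or => /andP[/andP[vA vB] /existsP[u /andP[uAB euv]]].
rewrite vA vB /=; case/setUP: uAB => [uA|uB].
  by apply/orP; left; apply/existsP; exists u; rewrite uA.
by apply/orP; right; apply/existsP; exists u; rewrite uB.
Qed.

Lemma nbhIU_sub (A B : {set V}) :
  nbh e (A :&: B) :&: nbh e (A :|: B) \subset nbh e A :&: nbh e B.
Proof.
apply/subsetP => v; rewrite !inE negb_or.
case/andP=> /andP[_ /existsP[u /andP[/setIP[uA uB] euv]]] /andP[/andP[vA vB] _].
by rewrite vA vB /=; apply/andP; split; apply/existsP; exists u; rewrite ?uA ?uB.
Qed.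

Lemma nbh_submodular (A B : {set V}) :
  #|nbh e (A :&: B)| + #|nbh e (A :|: B)| <= #|nbh e A| + #|nbh e B|.
Proof.
rewrite -cardsUI -[#|nbh e A| + _]cardsUI leq_add ?subset_leq_card ?nbhIU_sub //.
by rewrite subUset nbhI_sub nbhU_sub.
Qed.

Section TwoSeparators.
Variables K1 K2 : {set V}.
Hypotheses (sep1 : separator e X Y K1) (sep2 : separator e X Y K2).
Let A := Yreach K1.
Let B := Yreach K2.

Lemma nbh_sub_setU_seps (C : {set V}) :
  nbh e C \subset nbh e A :|: nbh e B -> nbh e C \subset K1 :|: K2.
Proof.
by move=> /subset_trans; apply; apply: setUSS; apply: nbh_Yreach_sub.
Qed.

Lemma nbh_disjointX_of_sub (C : {set V}) :
  nbh e C \subset nbh e A :|: nbh e B -> [disjoint nbh e C & X].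
Proof.
move/nbh_sub_setU_seps/disjointWl; apply.
by rewrite -setI_eq0 setIUl setU_eq0 !setI_eq0 !separator_disjointX.
Qed.

Lemma separator_nbhI : separator e X Y (nbh e (A :&: B)).
Proof.
apply: separator_nbh; last exact/nbh_disjointX_of_sub/nbhI_sub.
  by rewrite subsetI !sub_Yreach.
exact: disjointWl (subsetIl _ _) (Yreach_disjointX sep1).
Qed.

Lemma separator_nbhU : separator e X Y (nbh e (A :|: B)).
Proof.
apply: separator_nbh; last exact/nbh_disjointX_of_sub/nbhU_sub.
  exact: subset_trans (sub_Yreach sep1) (subsetUl _ _).
by rewrite -setI_eq0 setIUl setU_eq0 !setI_eq0 !Yreach_disjointX.
Qed.

Lemma sep_lt_nbhI : ~~ sep_ge e Y K1 K2 -> sep_lt e Y K1 (nbh e (A :&: B)).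
Proof.
case/subsetPn => v; rewrite !NR_Yreach negbK => vB vA.
have YAB : Y \subset A :&: B by rewrite subsetI !sub_Yreach.
have sub := Yreach_nbh_sub YAB.
apply/andP; split.
  apply/subsetP => w; rewrite !NR_Yreach; apply: contra => /(subsetP sub).
  by case/setIP.
apply: contraNneq vB => eqNR; move: vA.
by rewrite -[v \in A]negbK -NR_Yreach -eqNR NR_Yreach negbK => /(subsetP sub) /setIP[].
Qed.

Lemma card_nbhU_lt :
  #|K1| < #|nbh e (A :&: B)| -> #|nbh e (A :|: B)| < #|K2|.
Proof.
move=> ltI; rewrite -(ltn_add2l #|nbh e (A :&: B)|).
apply: leq_ltn_trans (nbh_submodular A B) _; rewrite -addSn leq_add //.
  exact: leq_ltn_trans (subset_leq_card (nbh_Yreach_sub K1)) ltI.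
exact: subset_leq_card (nbh_Yreach_sub K2).
Qed.

End TwoSeparators.
End Uncrossing.

Lemma witness_minimal (V : finType) (e : rel V) (X Y S KS K : {set V}) :
  witness e X Y S KS -> separator e X Y K -> [disjoint K & S] -> #|KS| <= #|K|.
Proof.
case/and3P=> _ _ /eqP exS sepK disK.
have rK : min_sep_size e X Y <= #|K| by apply: bigmin_leq.
have : cover_excess e X Y S <= excess e X Y K by apply: bigmin_leq; rewrite sepK.
by rewrite -exS /excess leq_subLR subnKC.
Qed.

Theorem lemma3 (V : finType) (e : rel V) (X Y : {set V}) :
  symmetric e -> irreflexive e -> [disjoint X & Y] ->
  normalized e X Y ->
  forall (S : {set V}), S \subset nbh e X ->
  (forall s y, s \in S -> y \in Y -> ~~ e s y) ->
  forall K1 KS : {set V},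
  important e X Y K1 -> [disjoint K1 & S] ->
  important_witness e X Y S KS ->
  sep_ge e Y K1 KS.
Proof.
move=> e_sym _ _ _ S _ _ K1 KS /andP[/andP[sep1 _] notK1] disK1S /andP[witKS _].
have sepS : separator e X Y KS by case/and3P: witKS.
apply: contraT => notge.
set A := Yreach e Y K1; set B := Yreach e Y KS.
have ltI : #|K1| < #|nbh e (A :&: B)|.
  rewrite ltnNge; apply: contra notK1 => leI; apply/existsP; exists (nbh e (A :&: B)).
  by rewrite (separator_nbhI e_sym sep1 sepS) (sep_lt_nbhI e_sym sep1 sepS notge).
have disU : [disjoint nbh e (A :|: B) & S].
  apply: disjointWl (nbh_sub_setU_seps e_sym (nbhU_sub e A B)) _.
  by rewrite -setI_eq0 setIUl setU_eq0 !setI_eq0 disK1S; case/and3P: witKS.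
have := witness_minimal witKS (separator_nbhU e_sym sep1 sepS) disU.
by rewrite leqNgt card_nbhU_lt.
Qed.
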